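(* Suppose $\mathcal{G}_k\equiv\mathcal{G}_*$ for all $k$, for a fixed digraph $\mathcal{G}_*$ on $\mathcal{V}=\{1,\dots,n\}$. (i) For every algorithm in $\mathcal{A}_{\rm ave}$, if global asymptotic consensus is achieved then $\mathcal{G}_*$ is quasi-strongly connected. (ii) For the algorithm in $\mathcal{A}_{\rm max}$, global finite-time consensus is achieved if and only if $\mathcal{G}_*$ is strongly connected.
   Context: Network of nodes $\mathcal{V}=\{1,\dots,n\}$, $n\ge 3$, discrete time, states $x_i(k)\in\mathbb{R}$. At each time $k$ a digraph $\mathcal{G}_k=(\mathcal{V},\mathcal{E}_k)$ is given; $j$ is a neighbor of $i$ at time $k$ if $(j,i)\in\mathcal{E}_k$, every node is always its own neighbor; $\mathcal{N}_i(k)$ is the neighbor set. The algorithm is $$x_i(k+1)=\eta_k x_i(k)+\alpha_k\min_{j\in\mathcal{N}_i(k)}x_j(k)+(1-\eta_k-\alpha_k)\max_{j\in\mathcal{N}_i(k)}x_j(k),$$ with node-independent parameters $\eta_k\ge0,\alpha_k\ge0,\eta_k+\alpha_k\le1$. $\mathcal{A}_{\rm ave}$: $\eta_k\in(0,1]$, $\alpha_k\in[0,1-\eta_k]$ for all $k$. $\mathcal{A}_{\rm max}$: $\eta_k=\alpha_k=0$ for all $k$ (i.e. $x_i(k+1)=\max_{j\in\mathcal{N}_i(k)}x_j(k)$). The iteration starts at time $k_0$ with $x(k_0)=x^0$. Asymptotic consensus: there is $z_*$ with $x_i(k)\to z_*$ for all $i$; finite-time consensus: there are $z_*$ and an integer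 $T_*$ with $x_i(T_* )=z_*$ for all $i$; ''global'' means for all $k_0\ge0$ and all $x^0\in\mathbb{R}^n$. A node $j$ is reachable from $i$ if there is a directed path from $i$ to $j$ (each node is reachable from itself). A digraph is strongly connected if every node is reachable from every other node, and quasi-strongly connected if it has a center, i.e. a node from which every node is reachable. *)

From Stdlib Require Import Reals List Relations Arith.
Import ListNotations.
Open Scope R_scope.

(* Nodes are 0, ..., n-1.  A digraph is given by a boolean edge relation
   E : nat -> nat -> bool, with E j i = true meaning (j,i) is an edge,
   i.e. j is a neighbor of i.  Only entries with both indices < n matter. *)

Definition nbrs (n : nat) (E : nat -> nat -> bool) (i : nat) : list nat :=
  filter (fun j => orb (Nat.eqb j i) (E j i)) (seq 0 n).

(* min / max of x_j over the neighbors j of i (i itself is a neighbor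
   when i < n, so seeding the fold with x i does not change the value). *)
Definition minN (n : nat) (E : nat -> nat -> bool) (x : nat -> R) (i : nat) : R :=
  fold_right (fun j acc => Rmin (x j) acc) (x i) (nbrs n E i).
Definition maxN (n : nat) (E : nat -> nat -> bool) (x : nat -> R) (i : nat) : R :=
  fold_right (fun j acc => Rmax (x j) acc) (x i) (nbrs n E i).

Definition step (n : nat) (E : nat -> nat -> bool) (eta alpha : nat -> R)
  (k : nat) (x : nat -> R) : nat -> R :=
  fun i => eta k * x i + alpha k * minN n E x i
           + (1 - eta k - alpha k) * maxN n E x i.

(* traj n E eta alpha k0 x0 t = state x(k0 + t) when the iteration
   starts at time k0 with x(k0) = x0. *)
Fixpoint traj (n : nat) (E : nat -> nat -> bool) (eta alpha : nat -> R)
  (k0 : nat) (x0 : nat -> R) (t : nat) : nat -> R :=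
  match t with
  | O => x0
  | S t' => step n E eta alpha (k0 + t') (traj n E eta alpha k0 x0 t')
  end.

Definition in_A_ave (eta alpha : nat -> R) : Prop :=
  forall k, 0 < eta k <= 1 /\ 0 <= alpha k <= 1 - eta k.
Definition eta_max : nat -> R := fun _ => 0.
Definition alpha_max : nat -> R := fun _ => 0.

Definition global_asymptotic_consensus (n : nat) (E : nat -> nat -> bool)
  (eta alpha : nat -> R) : Prop :=
  forall (k0 : nat) (x0 : nat -> R),
    exists z : R, forall i, (i < n)%nat ->
      Un_cv (fun t => traj n E eta alpha k0 x0 t i) z.

Definition global_finite_time_consensus (n : nat) (E : nat -> nat -> bool)
  (eta alpha : nat -> R) : Prop :=
  forall (k0 : nat) (x0 : nat -> R),
    exists (z : R) (t : nat), forall i, (i < n)%nat ->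
      traj n E eta alpha k0 x0 t i = z.

Definition edge (n : nat) (E : nat -> nat -> bool) (a b : nat) : Prop :=
  (a < n)%nat /\ (b < n)%nat /\ E a b = true.
Definition reachable (n : nat) (E : nat -> nat -> bool) (i j : nat) : Prop :=
  clos_refl_trans nat (edge n E) i j.

Definition strongly_connected (n : nat) (E : nat -> nat -> bool) : Prop :=
  forall i j, (i < n)%nat -> (j < n)%nat -> reachable n E i j.
Definition quasi_strongly_connected (n : nat) (E : nat -> nat -> bool) : Prop :=
  exists c, (c < n)%nat /\ forall j, (j < n)%nat -> reachable n E c j.

(* The proof rests on two facts about the dynamics on a fixed graph E.
   (A) Upstream invariance: the new state of node i only depends on the states
       of its neighbours, i.e. of nodes upstream of i.  Hence, for ANY
       parameters eta, alpha, if the initial state equals v on every ancestor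
       of a node a, the state of a stays equal to v forever.
   (B) For the max algorithm each state is nondecreasing, never exceeds the
       initial maximum M, and a value at node j is propagated to node i after
       at most "length of a path j ->* i" steps.
   Part (i): if E is not quasi-strongly connected, two nodes a, b have no
   common ancestor; starting from 0 on the ancestors of a and 1 elsewhere,
   (A) freezes a at 0 and b at 1, so no consensus is possible.
   Part (ii), "only if": if j is not reachable from i, the same initial state
   (built from j) freezes j at 0 while, by (B), node i stays >= 1.
   Part (ii), "if": by (B) and strong connectivity, every node attains M after
   a bounded delay and then stays at M, so all nodes agree at a common time. *)

From Pilot Require Import Defs.
From Stdlib Require Import Reals List Relations Arith Lia Lra Classical ClassicalEpsilon.
Open Scope R_scope.

Lemma in_nbrs n E i j : In j (nbrs n E i) -> (j < n)%nat /\ (j = i \/ E j i = true).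
Proof.
  unfold nbrs; intros Hin; apply filter_In in Hin; destruct Hin as [Hj Hji].
  apply in_seq in Hj; apply Bool.orb_true_iff in Hji; split; [lia|].
  destruct Hji as [Hji|Hji]; [left; apply Nat.eqb_eq|right]; exact Hji.
Qed.

Lemma nbrs_in n E i j : (j < n)%nat -> (j = i \/ E j i = true) -> In j (nbrs n E i).
Proof.
  intros Hj Hji; unfold nbrs; apply filter_In; split.
  - apply in_seq; lia.
  - apply Bool.orb_true_iff.
    destruct Hji as [Hji|Hji]; [left; apply Nat.eqb_eq|right]; exact Hji.
Qed.

Lemma fold_min_const (x : nat -> R) v i l : x i = v -> (forall j, In j l -> x j = v) ->
  fold_right (fun j acc => Rmin (x j) acc) (x i) l = v.
Proof.
  induction l as [|a l IH]; simpl; intros Hi Hl; auto.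
  rewrite IH, Hl by auto; apply Rmin_left; lra.
Qed.

Lemma fold_max_const (x : nat -> R) v i l : x i = v -> (forall j, In j l -> x j = v) ->
  fold_right (fun j acc => Rmax (x j) acc) (x i) l = v.
Proof.
  induction l as [|a l IH]; simpl; intros Hi Hl; auto.
  rewrite IH, Hl by auto; apply Rmax_left; lra.
Qed.

Lemma fold_max_seed (x : nat -> R) i l : x i <= fold_right (fun j acc => Rmax (x j) acc) (x i) l.
Proof.
  induction l as [|a l IH]; simpl; [lra|].
  eapply Rle_trans; [exact IH|apply Rmax_r].
Qed.

Lemma fold_max_in (x : nat -> R) i l j : In j l ->
  x j <= fold_right (fun j acc => Rmax (x j) acc) (x i) l.
Proof.
  induction l as [|a l IH]; simpl; intros Hj; [contradiction|].
  destruct Hj as [<-|Hj]; [apply Rmax_l|].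
  eapply Rle_trans; [apply IH; exact Hj|apply Rmax_r].
Qed.

Lemma fold_max_le (x : nat -> R) M i l : x i <= M -> (forall j, In j l -> x j <= M) ->
  fold_right (fun j acc => Rmax (x j) acc) (x i) l <= M.
Proof.
  induction l as [|a l IH]; simpl; intros Hi Hl; auto.
  apply Rmax_lub; auto.
Qed.

Lemma reachable_source_lt n E c a : reachable n E c a -> (a < n)%nat -> (c < n)%nat.
Proof.
  induction 1 as [? ? [? [? ?]]| |]; auto.
Qed.

Lemma traj_const_upstream n E eta alpha k0 x0 a v : (a < n)%nat ->
  (forall j, reachable n E j a -> x0 j = v) ->
  forall t j, reachable n E j a -> traj n E eta alpha k0 x0 t j = v.
Proof.
  intros Ha Hx0; induction t as [|t IH]; simpl; intros j Hj; auto.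
  assert (Hjn : (j < n)%nat) by (eapply reachable_source_lt; eauto).
  assert (Hnbrs : forall k, In k (nbrs n E j) -> traj n E eta alpha k0 x0 t k = v).
  { intros k Hk; apply in_nbrs in Hk; destruct Hk as [Hk [->|Hkj]]; auto.
    apply IH, rt_trans with j; [apply rt_step; repeat split; auto|exact Hj]. }
  unfold step, Defs.minN, Defs.maxN.
  rewrite (fold_min_const _ v), (fold_max_const _ v), IH by auto; ring.
Qed.

Definition ancestor_indicator (n : nat) (E : nat -> nat -> bool) (a : nat) : nat -> R :=
  fun k => if excluded_middle_informative (reachable n E k a) then 0 else 1.

Lemma indicator_freezes_target n E eta alpha k0 a : (a < n)%nat ->
  forall t, traj n E eta alpha k0 (ancestor_indicator n E a) t a = 0.
Proof.
  intros Ha t; apply (traj_const_upstream n E eta alpha k0 _ a 0); auto; [|apply rt_refl].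
  intros j Hj; unfold ancestor_indicator.
  destruct excluded_middle_informative; [reflexivity|contradiction].
Qed.

Lemma indicator_freezes_separated n E eta alpha k0 a b : (b < n)%nat ->
  (forall c, reachable n E c a -> reachable n E c b -> False) ->
  forall t, traj n E eta alpha k0 (ancestor_indicator n E a) t b = 1.
Proof.
  intros Hb Hsep t; apply (traj_const_upstream n E eta alpha k0 _ b 1); auto; [|apply rt_refl].
  intros j Hj; unfold ancestor_indicator.
  destruct excluded_middle_informative as [Hja|]; [exfalso; eauto|reflexivity].
Qed.

(* If every pair of nodes has a common ancestor, some node is an ancestor of
   all nodes: extend a common ancestor of 0..m to one of 0..m+1. *)
Lemma common_ancestors_qsc n E : (0 < n)%nat ->
  (forall a b, (a < n)%nat -> (b < n)%nat ->
     exists c, (c < n)%nat /\ reachable n E c a /\ reachable n E c b) ->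
  quasi_strongly_connected n E.
Proof.
  intros Hn Hpairs.
  assert (Hprefix : forall m, (m < n)%nat ->
            exists c, (c < n)%nat /\ forall j, (j <= m)%nat -> reachable n E c j).
  { induction m as [|m IH]; intros Hm.
    - destruct (Hpairs 0%nat 0%nat) as [c [Hc [H0 _]]]; auto.
      exists c; split; auto; intros j Hj; replace j with 0%nat by lia; exact H0.
    - destruct IH as [c [Hc Hc_all]]; [lia|].
      destruct (Hpairs c (S m)) as [c' [Hc' [Hc'c Hc'm]]]; auto.
      exists c'; split; auto; intros j Hj.
      destruct (Nat.eq_dec j (S m)) as [->|]; auto.
      apply rt_trans with c; [exact Hc'c|apply Hc_all; lia]. }
  destruct (Hprefix (n - 1)%nat) as [c [Hc Hc_all]]; [lia|].
  exists c; split; auto; intros j Hj; apply Hc_all; lia.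
Qed.

Lemma separated_pair_of_not_qsc n E : (0 < n)%nat -> ~ quasi_strongly_connected n E ->
  exists a b, (a < n)%nat /\ (b < n)%nat /\
    forall c, reachable n E c a -> reachable n E c b -> False.
Proof.
  intros Hn Hnq; apply NNPP; intros Hnsep; apply Hnq, common_ancestors_qsc; auto.
  intros a b Ha Hb; apply NNPP; intros Hnc; apply Hnsep.
  exists a, b; repeat split; auto; intros c Hca Hcb; apply Hnc.
  exists c; split; [eapply reachable_source_lt; eauto|auto].
Qed.

Lemma Un_cv_const_unique (u : nat -> R) v z : (forall t, u t = v) -> Un_cv u z -> z = v.
Proof.
  intros Hu Hcv; apply (UL_sequence u); auto.
  intros eps Heps; exists 0%nat; intros t _; rewrite Hu; unfold R_dist.
  replace (v - v) with 0 by ring; rewrite Rabs_R0; lra.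
Qed.

Lemma argmax_lt (x : nat -> R) n : (0 < n)%nat ->
  exists j, (j < n)%nat /\ forall i, (i < n)%nat -> x i <= x j.
Proof.
  induction n as [|n IH]; intros Hn; [lia|].
  destruct (Nat.eq_dec n 0) as [->|Hn0].
  { exists 0%nat; split; [lia|]; intros i Hi; replace i with 0%nat by lia; lra. }
  destruct IH as [j [Hj Hmax]]; [lia|].
  destruct (Rle_dec (x j) (x n)).
  - exists n; split; [lia|]; intros i Hi.
    destruct (Nat.eq_dec i n) as [->|]; [lra|].
    eapply Rle_trans; [apply Hmax; lia|auto].
  - exists j; split; [lia|]; intros i Hi.
    destruct (Nat.eq_dec i n) as [->|]; [lra|apply Hmax; lia].
Qed.

Lemma eventually_uniform (P : nat -> nat -> Prop) n :
  (forall i, (i < n)%nat -> exists d, forall t, (d <= t)%nat -> P t i) ->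
  exists D, forall i, (i < n)%nat -> forall t, (D <= t)%nat -> P t i.
Proof.
  intros HP; induction n as [|n IH].
  - exists 0%nat; intros; lia.
  - destruct IH as [D HD]; [intros i Hi; apply HP; lia|].
    destruct (HP n) as [d Hd]; [lia|].
    exists (Nat.max D d); intros i Hi t Ht.
    destruct (Nat.eq_dec i n) as [->|]; [apply Hd; lia|apply HD; lia].
Qed.

Section MaxAlgorithm.
Variables (n : nat) (E : nat -> nat -> bool) (k0 : nat) (x0 : nat -> R).
Let x t := traj n E eta_max alpha_max k0 x0 t.

Lemma max_traj_S t i : x (S t) i = Defs.maxN n E (x t) i.
Proof. unfold x; simpl; unfold step, eta_max, alpha_max; ring. Qed.

Lemma max_traj_mono t d i : x t i <= x (t + d)%nat i.
Proof.
  induction d as [|d IH]; [rewrite Nat.add_0_r; lra|].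
  eapply Rle_trans; [exact IH|].
  rewrite Nat.add_succ_r, max_traj_S; apply fold_max_seed.
Qed.

Lemma max_traj_edge t j i : edge n E j i -> x t j <= x (S t) i.
Proof.
  intros [Hj [Hi He]]; rewrite max_traj_S; apply fold_max_in, nbrs_in; auto.
Qed.

Lemma max_traj_reach j i : reachable n E j i ->
  exists d, forall t, x t j <= x (t + d)%nat i.
Proof.
  induction 1 as [j i He|i|j m i _ [d1 H1] _ [d2 H2]].
  - exists 1%nat; intros t; rewrite Nat.add_1_r; apply max_traj_edge; exact He.
  - exists 0%nat; intros t; rewrite Nat.add_0_r; lra.
  - exists (d1 + d2)%nat; intros t; rewrite Nat.add_assoc.
    eapply Rle_trans; [apply H1|apply H2].
Qed.

Lemma max_traj_bounded M : (forall j, (j < n)%nat -> x0 j <= M) ->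
  forall t i, (i < n)%nat -> x t i <= M.
Proof.
  intros HM; induction t as [|t IH]; intros i Hi; [exact (HM i Hi)|].
  rewrite max_traj_S; apply fold_max_le; [apply IH; exact Hi|].
  intros j Hj; apply IH, (in_nbrs _ _ _ _ Hj).
Qed.

Lemma max_traj_finite_consensus : (0 < n)%nat -> strongly_connected n E ->
  exists M D, forall i, (i < n)%nat -> x D i = M.
Proof.
  intros Hn Hsc.
  destruct (argmax_lt x0 n Hn) as [js [Hjs Hmax]].
  destruct (eventually_uniform (fun t i => x0 js <= x t i) n) as [D HD].
  { intros i Hi; destruct (max_traj_reach js i (Hsc js i Hjs Hi)) as [d Hd].
    exists d; intros t Ht; replace t with (0 + d + (t - d))%nat by lia.
    apply Rle_trans with (x (0 + d)%nat i); [exact (Hd 0%nat)|apply max_traj_mono]. }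
  exists (x0 js), D; intros i Hi; apply Rle_antisym.
  - apply (max_traj_bounded (x0 js) Hmax D i Hi).
  - apply HD; auto.
Qed.
End MaxAlgorithm.

Theorem theorem3 (n : nat) (E : nat -> nat -> bool) (Hn : (3 <= n)%nat) :
  (forall eta alpha : nat -> R, in_A_ave eta alpha ->
     global_asymptotic_consensus n E eta alpha ->
     quasi_strongly_connected n E)
  /\
  (global_finite_time_consensus n E eta_max alpha_max <->
     strongly_connected n E).
Proof.
  split; [|split].
  - (* The argument works for arbitrary parameters. *)
    intros eta alpha _ Hcons; apply NNPP; intros Hnq.
    destruct (separated_pair_of_not_qsc n E) as [a [b [Ha [Hb Hsep]]]]; [lia|exact Hnq|].
    destruct (Hcons 0%nat (ancestor_indicator n E a)) as [z Hz].
    assert (Hz_a : z = 0) by (eapply Un_cv_const_unique;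
      [apply indicator_freezes_target; exact Ha|apply Hz; exact Ha]).
    assert (Hz_b : z = 1) by (eapply Un_cv_const_unique;
      [apply indicator_freezes_separated; eauto|apply Hz; exact Hb]).
    lra.
  - intros Hft i j Hi Hj; apply NNPP; intros Hij.
    destruct (Hft 0%nat (ancestor_indicator n E j)) as [z [t Ht]].
    pose proof (indicator_freezes_target n E eta_max alpha_max 0 j Hj t) as Hj0.
    pose proof (max_traj_mono n E 0 (ancestor_indicator n E j) 0 t i) as Hi1.
    assert (Hi_init : ancestor_indicator n E j i = 1).
    { unfold ancestor_indicator; destruct excluded_middle_informative; tauto. }
    simpl in Hi1; rewrite Ht in Hj0, Hi1 by auto; lra.
  - intros Hsc k0 x0; apply max_traj_finite_consensus; [lia|exact Hsc].
Qed.
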